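(* Let $G$ be a finite simple graph and let $G_1,\dots,G_k$ be its connected components. Then $\alpha^*(G)\geq \sum_{i=1}^k \alpha^*(G_i)$. As a result, if $G$ has $k$ components, then $\alpha^*(G)\geq k$.
   Context: For a graph $H$, an independent set $I$ of $H$ is light if $\sum_{u\in I}d_H(u)\le |V(H)|-1$; $\alpha^*(H)$ is the maximum size of a light independent set of $H$. *)

From mathcomp Require Import all_boot.
Set Implicit Arguments. Unset Strict Implicit. Unset Printing Implicit Defensive.

(* A finite simple graph: vertex set a finType T, edge relation e : rel T,
   assumed symmetric and irreflexive in the theorem. *)

Definition deg_in (T : finType) (e : rel T) (S : {set T}) (u : T) : nat :=
  #|[set v in S | e u v]|.

Definition indep_in (T : finType) (e : rel T) (S I : {set T}) : bool :=
  (I \subset S) && [forall u in I, forall v in I, ~~ e u v].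

Definition light_in (T : finType) (e : rel T) (S I : {set T}) : bool :=
  indep_in e S I && (\sum_(u in I) deg_in e S u <= #|S| - 1).

Definition alpha_star (T : finType) (e : rel T) (S : {set T}) : nat :=
  \max_(I : {set T} | light_in e S I) #|I|.

Definition components (T : finType) (e : rel T) : {set {set T}} :=
  [set [set y | connect e x y] | x : T].

(* The union of maximum light independent sets of the components is a light
   independent set of G: there are no edges between components, the
   degree of a vertex is the same in G as in its component, and the budgets
   add up since sum_i (|V(G_i)| - 1) <= |V(G)| - 1.  Moreover alpha^* of a
   nonempty graph is at least 1, as every single vertex is a light set. *)

From mathcomp Require Import all_boot zify.
Set Implicit Arguments. Unset Strict Implicit. Unset Printing Implicit Defensive.

Lemma leq_sum_predn (I : Type) (r : seq I) (P : pred I) (F : I -> nat) :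
  \sum_(i <- r | P i) (F i).-1 <= (\sum_(i <- r | P i) F i).-1.
Proof.
elim: r => [|i r IHr]; first by rewrite !big_nil.
rewrite !big_cons; case: (P i) => //; lia.
Qed.

Lemma sum_bigcup_subblocks (T : finType) (P : {set {set T}})
    (J : {set T} -> {set T}) (F : T -> nat) :
    trivIset P -> (forall A, A \in P -> J A \subset A) ->
  \sum_(x in \bigcup_(A in P) J A) F x = \sum_(A in P) \sum_(x in J A) F x.
Proof.
move=> tiP subJ; set U := \bigcup_(A in P) J A.
have subU : U \subset cover P.
  by apply/bigcupsP=> A PA; apply: subset_trans (subJ A PA) (bigcup_sup _ PA).
rewrite -(eq_bigl _ _ (fun x => andb_idl (subsetP subU x))).
rewrite big_trivIset_cond //; apply: eq_bigr => A PA; apply: eq_bigl => x.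
apply/andP/idP => [[Ax /bigcupP[B PB JBx]] | JAx]; last first.
  by split; [exact: subsetP (subJ A PA) x JAx | apply/bigcupP; exists A].
have Bx := subsetP (subJ B PB) x JBx.
by rewrite -(def_pblock tiP PA Ax) (def_pblock tiP PB Bx).
Qed.

Section LightSets.

Variables (T : finType) (e : rel T).

Lemma light_in_sub (S I : {set T}) : light_in e S I -> I \subset S.
Proof. by case/andP=> /andP[]. Qed.

Lemma light_in_set0 (S : {set T}) : light_in e S set0.
Proof.
rewrite /light_in /indep_in sub0set big_set0 andbT /=.
by apply/forall_inP=> u; rewrite inE.
Qed.

Lemma light_in_set1 (S : {set T}) (x : T) :
  irreflexive e -> x \in S -> light_in e S [set x].
Proof.
move=> e_irr Sx; rewrite /light_in /indep_in sub1set Sx big_set1 /=.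
apply/andP; split.
  apply/forall_inP=> u /set1P->; apply/forall_inP=> v /set1P->.
  by rewrite e_irr.
have sub_nbhd : [set v in S | e x v] \subset S :\ x.
  apply/subsetP=> v; rewrite !inE => /andP[Sv exv]; rewrite Sv andbT.
  by apply: contraTneq exv => ->; rewrite e_irr.
by have := subset_leq_card sub_nbhd; rewrite [#|S|](cardsD1 x) Sx add1n subn1.
Qed.

Lemma leq_card_alpha_star (S I : {set T}) :
  light_in e S I -> #|I| <= alpha_star e S.
Proof. exact: leq_bigmax_cond. Qed.

Definition max_light (S : {set T}) : {set T} :=
  [arg max_(I > set0 | light_in e S I) #|I|].

Lemma light_max_light (S : {set T}) : light_in e S (max_light S).
Proof. by rewrite /max_light; case: arg_maxnP => //; exact: light_in_set0. Qed.

Lemma alpha_star_max_light (S : {set T}) : alpha_star e S = #|max_light S|.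
Proof. exact/bigmax_eq_arg/light_in_set0. Qed.

Lemma alpha_star_gt0 (S : {set T}) :
  irreflexive e -> S != set0 -> 0 < alpha_star e S.
Proof.
move=> e_irr /set0Pn[x Sx].
by have := leq_card_alpha_star (light_in_set1 e_irr Sx); rewrite cards1.
Qed.

End LightSets.

Section Components.

Variables (T : finType) (e : rel T).
Hypothesis e_sym : symmetric e.

Lemma components_partition : partition (components e) [set: T].
Proof.
have -> : components e = equivalence_partition (connect e) [set: T].
  apply/setP=> C; apply/imsetP/imsetP=> -[x _ ->]; exists x => //;
  by apply/setP=> y; rewrite !inE.
apply: equivalence_partitionP => x y z _ _ _; split; first exact: connect0.
by move/(same_connect (sym_connect_sym e_sym)).
Qed.

Lemma components_trivIset : trivIset (components e).
Proof. by case/and3P: components_partition. Qed.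

Lemma components_neq0 (C : {set T}) : C \in components e -> C != set0.
Proof.
case/and3P: components_partition => _ _ no_set0 compC.
by apply: contraNneq no_set0 => <-.
Qed.

Lemma component_edge_closed (C : {set T}) (u v : T) :
  C \in components e -> u \in C -> e u v -> v \in C.
Proof.
case/imsetP=> x _ -> {C}; rewrite !inE => xu uv.
exact: connect_trans xu (connect1 uv).
Qed.

Lemma deg_in_component (C : {set T}) (u : T) :
  C \in components e -> u \in C -> deg_in e C u = deg_in e [set: T] u.
Proof.
move=> compC Cu; apply: eq_card => v; rewrite !inE andbC.
by apply: andb_idr; exact: component_edge_closed.
Qed.

Variable J : {set T} -> {set T}.
Hypothesis J_light : forall C, C \in components e -> light_in e C (J C).

Let J_sub (C : {set T}) : C \in components e -> J C \subset C.
Proof. by move/J_light/light_in_sub. Qed.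

Lemma sum_bigcup_components (F : T -> nat) :
  \sum_(u in \bigcup_(C in components e) J C) F u =
  \sum_(C in components e) \sum_(u in J C) F u.
Proof. exact: sum_bigcup_subblocks components_trivIset J_sub. Qed.

Lemma indep_bigcup_components :
  indep_in e [set: T] (\bigcup_(C in components e) J C).
Proof.
rewrite /indep_in subsetT /=; apply/forall_inP=> u /bigcupP[C1 compC1 J1u].
apply/forall_inP=> v /bigcupP[C2 compC2 J2v]; apply/negP=> uv.
have C1u := subsetP (J_sub compC1) u J1u.
have C1v := component_edge_closed compC1 C1u uv.
have C2v := subsetP (J_sub compC2) v J2v.
have tiC := components_trivIset.
have eqC : C2 = C1.
  by rewrite -(def_pblock tiC compC1 C1v) (def_pblock tiC compC2 C2v).
rewrite {C2 compC2 C2v}eqC in J2v.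
case/andP: (J_light compC1) => /andP[_ /forall_inP/(_ u J1u)/forall_inP].
by move/(_ v J2v)/negP.
Qed.

Lemma light_bigcup_components :
  light_in e [set: T] (\bigcup_(C in components e) J C).
Proof.
rewrite /light_in indep_bigcup_components sum_bigcup_components /=.
rewrite (card_partition components_partition) subn1.
apply: leq_trans (leq_sum_predn _ _ _); apply: leq_sum => C compC.
have deg_eq u : u \in J C -> deg_in e C u = deg_in e [set: T] u.
  by move/(subsetP (J_sub compC)); exact: deg_in_component.
rewrite -(eq_bigr _ deg_eq).
by case/andP: (J_light compC) => _; rewrite subn1.
Qed.

End Components.

Theorem lemma2p2 (T : finType) (e : rel T)
    (e_sym : symmetric e) (e_irr : irreflexive e) :
  \sum_(C in components e) alpha_star e C <= alpha_star e [set: T]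
  /\ #|components e| <= alpha_star e [set: T].
Proof.
have J_light C : C \in components e -> light_in e C (max_light e C).
  by move=> _; exact: light_max_light.
have sum_le : \sum_(C in components e) alpha_star e C <= alpha_star e [set: T].
  have -> : \sum_(C in components e) alpha_star e C =
            #|\bigcup_(C in components e) max_light e C|.
    rewrite -sum1_card (sum_bigcup_components e_sym J_light).
    by apply: eq_bigr => C _; rewrite sum1_card alpha_star_max_light.
  exact/leq_card_alpha_star/light_bigcup_components.
split=> //; apply: leq_trans sum_le; rewrite -sum1_card.
by apply: leq_sum => C /(components_neq0 e_sym); exact: alpha_star_gt0.
Qed.
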